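(* Let $G$ be a finite group and $p$ a prime dividing $|G|$. If $\mathcal{O}_p(G)\neq1$, then the finite spaces $\mathcal{S}_p(G)'/G$ and $\mathcal{B}_p(G)'/G$ are contractible.
   Context: $\mathcal{O}_p(G)$ is the largest normal $p$-subgroup of $G$. $\mathcal{S}_p(G)$ is the poset of non-trivial $p$-subgroups of $G$; $\mathcal{B}_p(G)=\{P\in\mathcal{S}_p(G):P=\mathcal{O}_p(N_G(P))\}$. $G$ acts by conjugation. For a poset $X$, $X'$ is the poset of non-empty chains ordered by inclusion with componentwise $G$-action, and $X'/G$ is the orbit poset ($\overline{c}\le\overline{d}$ iff some representatives satisfy $c_1\subseteq d_1$). Finite posets are finite $T_0$ spaces whose open sets are the down-sets. *)

From Stdlib Require Import Rdefinitions Rbasic_fun.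
From mathcomp Require Import all_boot all_fingroup all_solvable.

Set Implicit Arguments.
Unset Strict Implicit.
Unset Printing Implicit Defensive.

Local Open Scope group_scope.

(* A finite poset is given by a carrier X : {set T} (T a finType) and an
   order relation le.  Its open sets are the down-sets of X. *)

Definition unit_interval (t : R) : Prop := Rle Rdefinitions.R0 t /\ Rle t Rdefinitions.R1.

Definition down_open (T : finType) (le : rel T) (X U : {set T}) : Prop :=
  U \subset X /\
  (forall x y, x \in U -> y \in X -> le y x -> y \in U).

(* Openness of W (restricted to X x [0,1]) in the product topology of the
   finite space X with the unit interval (subspace of the reals):
   every point has a basic open rectangle U x ((t-eps,t+eps) /\ [0,1])
   inside W, with U open in X. *)
Definition prod_open (T : finType) (le : rel T) (X : {set T})
    (W : T -> R -> Prop) : Prop :=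
  forall x t, x \in X -> unit_interval t -> W x t ->
    exists U : {set T}, down_open le X U /\ x \in U /\
      exists eps : R, Rlt Rdefinitions.R0 eps /\
        forall y s, y \in U -> unit_interval s ->
          Rlt (Rabs (Rminus s t)) eps -> W y s.

Definition homotopy_continuous (T : finType) (le : rel T) (X : {set T})
    (H : T -> R -> T) : Prop :=
  forall U : {set T}, down_open le X U ->
    prod_open le X (fun x t => H x t \in U).

Definition contractible (T : finType) (le : rel T) (X : {set T}) : Prop :=
  exists x0, x0 \in X /\
  exists H : T -> R -> T,
    (forall x t, x \in X -> unit_interval t -> H x t \in X) /\
    (forall x, x \in X -> H x Rdefinitions.R0 = x /\ H x Rdefinitions.R1 = x0) /\
    homotopy_continuous le X H.

Definition Sp (gT : finGroupType) (G : {group gT}) (p : nat) : {set {group gT}} :=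
  [set P : {group gT} | (P \subset G) && p.-group P && (P :!=: 1)].

Definition Bp (gT : finGroupType) (G : {group gT}) (p : nat) : {set {group gT}} :=
  [set P in Sp G p | P :==: 'O_p('N_G(P))].

Definition is_chain (gT : finGroupType) (S : {set {group gT}})
    (c : {set {group gT}}) : bool :=
  [&& c != set0, c \subset S &
      [forall P in c, forall Q in c, (P \subset Q) || (Q \subset P)]].

Definition chains (gT : finGroupType) (S : {set {group gT}})
    : {set {set {group gT}}} := [set c | is_chain S c].

Definition chain_conj (gT : finGroupType) (c : {set {group gT}}) (g : gT)
    : {set {group gT}} := [set (P :^ g)%G | P in c].

Definition chain_orbit (gT : finGroupType) (G : {group gT})
    (c : {set {group gT}}) : {set {set {group gT}}} :=
  [set chain_conj c g | g in G].

Definition orbit_poset (gT : finGroupType) (G : {group gT})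
    (S : {set {group gT}}) : {set {set {set {group gT}}}} :=
  [set chain_orbit G c | c in chains S].

Definition orbit_le (gT : finGroupType) : rel {set {set {group gT}}} :=
  fun O1 O2 => [exists c in O1, exists d in O2, c \subset d].

(* On a finite T0 space, comparable order-preserving self-maps are homotopic,
   and order-preserving, conjugation-equivariant maps on chains of
   p-subgroups induce such maps of the orbit poset.  So it suffices to join
   the identity to the constant chain {N}, N = O_p(G), by a zigzag of
   comparable such maps.  Every P in B_p(G) contains N (in the p-group PN the
   normalizer of P lies in P, so PN = P), whence c <= c U {N} >= {N}.  In
   S_p(G), joining with N the members of order at least n, for n decreasing
   from |G| + 1 to 0, moves a chain through chains (two consecutive stages
   together still form a chain) to one whose members all contain N, where
   the same zigzag applies. *)

From Stdlib Require Import Rdefinitions Rbasic_fun RIneq Lra.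
From mathcomp Require Import all_boot all_fingroup all_solvable.

Set Implicit Arguments.
Unset Strict Implicit.
Unset Printing Implicit Defensive.

Local Open Scope group_scope.

Section FiniteSpaceHomotopy.
Variables (T : finType) (le : rel T) (X : {set T}).
Local Open Scope R_scope.

Lemma down_open_full : down_open le X X.
Proof. by split. Qed.

Lemma down_openI U V :
  down_open le X U -> down_open le X V -> down_open le X (U :&: V).
Proof.
move=> [sUX dU] [_ dV]; split; first exact: subset_trans (subsetIl U V) sUX.
move=> x y /setIP[xU xV] yX le_yx.
by rewrite inE (dU x y xU yX le_yx) (dV x y xV yX le_yx).
Qed.

Lemma down_open_preimage f U :
  {in X, forall x, f x \in X} -> {in X &, {homo f : x y / le x y}} ->
  down_open le X U -> down_open le X [set x in X | f x \in U].
Proof.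
move=> fX f_homo [_ dU]; split; first by apply/subsetP=> x /setIdP[].
move=> x y /setIdP[xX fxU] yX le_yx; rewrite inE yX.
exact: dU fxU (fX y yX) (f_homo y x yX xX le_yx).
Qed.

Definition prod_nbhd (x : T) (t : R) (W : T -> R -> Prop) : Prop :=
  exists U : {set T}, down_open le X U /\ x \in U /\
    exists eps : R, 0 < eps /\
      forall y s, y \in U -> unit_interval s -> Rabs (s - t) < eps -> W y s.

Lemma prod_nbhd_ball x t eps :
  x \in X -> 0 < eps -> prod_nbhd x t (fun _ s => Rabs (s - t) < eps).
Proof.
move=> xX eps_gt0; exists X; split; first exact: down_open_full.
by split=> //; exists eps; split.
Qed.

Lemma prod_nbhdI x t W1 W2 : prod_nbhd x t W1 -> prod_nbhd x t W2 ->
  prod_nbhd x t (fun y s => W1 y s /\ W2 y s).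
Proof.
move=> [U1 [oU1 [xU1 [e1 [e1_gt0 W1U]]]]] [U2 [oU2 [xU2 [e2 [e2_gt0 W2U]]]]].
exists (U1 :&: U2); split; first exact: down_openI.
split; first by rewrite inE xU1.
exists (Rmin e1 e2); split; first exact: Rmin_glb_lt.
move=> y s /setIP[yU1 yU2] us st_lt.
have := Rmin_l e1 e2; have := Rmin_r e1 e2.
by split; [apply: W1U | apply: W2U] => //; lra.
Qed.

Lemma prod_nbhdW x t (W W' : T -> R -> Prop) :
  (forall y s, W y s -> W' y s) -> prod_nbhd x t W -> prod_nbhd x t W'.
Proof.
move=> WW' [U [oU [xU [e [e_gt0 WU]]]]].
by exists U; split=> //; split=> //; exists e; split=> // y s *; apply/WW'/WU.
Qed.

Definition homotopic (f g : T -> T) : Prop :=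
  exists H : T -> R -> T,
    [/\ forall x t, x \in X -> unit_interval t -> H x t \in X,
        forall x, x \in X -> H x 0 = f x /\ H x 1 = g x &
        homotopy_continuous le X H].

(* The homotopy jumps from f to g at time 1: this is continuous because every
   open set containing g x also contains f x. *)
Lemma homotopic_le f g :
  {in X, forall x, f x \in X} -> {in X, forall x, g x \in X} ->
  {in X &, {homo f : x y / le x y}} -> {in X &, {homo g : x y / le x y}} ->
  {in X, forall x, le (f x) (g x)} -> homotopic f g.
Proof.
move=> fX gX f_homo g_homo le_fg.
exists (fun x t => if Rlt_le_dec t 1 then f x else g x); split.
- by move=> x t xX _; case: (Rlt_le_dec t 1) => /= _; [apply: fX | apply: gX].
- move=> x xX; split.
    by case: (Rlt_le_dec 0 1) => //=; lra.
  by case: (Rlt_le_dec 1 1) => //=; lra.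
move=> U oU x t xX ut; case: (Rlt_le_dec t 1) => /= [t_lt1|t_ge1] HU.
  exists [set y in X | f y \in U]; split; first exact: down_open_preimage.
  split; first by rewrite inE xX.
  exists (1 - t); split=> [|y s /setIdP[_ fyU] _ /Rabs_def2[st_lt _]]; first lra.
  by case: (Rlt_le_dec s 1) => //= s_ge1; lra.
exists [set y in X | g y \in U]; split; first exact: down_open_preimage.
split; first by rewrite inE xX.
exists 1; split=> [|y s /setIdP[yX gyU] _ _]; first lra.
case: (Rlt_le_dec s 1) => //= _; case: oU => _ dU.
exact: dU gyU (fX y yX) (le_fg y yX).
Qed.

Lemma homotopy_continuous_reparam H (phi : R -> R) k :
  0 < k -> (forall t, unit_interval t -> unit_interval (phi t)) ->
  (forall s t, Rabs (phi s - phi t) <= k * Rabs (s - t)) ->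
  homotopy_continuous le X H ->
  homotopy_continuous le X (fun x t => H x (phi t)).
Proof.
move=> k_gt0 phiI phi_lip Hc U oU x t xX ut HU.
have [V [oV [xV [e [e_gt0 HV]]]]] := Hc U oU x (phi t) xX (phiI t ut) HU.
exists V; split=> //; split=> //; exists (e / k); split.
  exact: Rdiv_lt_0_compat.
move=> y s yV us st_lt; apply: HV => //; first exact: phiI.
apply: Rle_lt_trans (phi_lip s t) _.
replace e with (k * (e / k)) by (field; lra).
exact: Rmult_lt_compat_l.
Qed.

Lemma homotopy_continuous_glue K1 K2 a :
  {in X, forall x, K1 x a = K2 x a} ->
  homotopy_continuous le X K1 -> homotopy_continuous le X K2 ->
  homotopy_continuous le X (fun x t => if Rle_dec t a then K1 x t else K2 x t).
Proof.
move=> K12 K1c K2c U oU x t xX ut KU.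
have left_piece : prod_nbhd x t (fun y s => s <= a -> K1 y s \in U).
  case: (Rle_dec t a) KU => /= [t_le_a|t_gt_a] KU.
    exact: prod_nbhdW (K1c U oU x t xX ut KU) => y s KyU _.
  apply: prod_nbhdW (prod_nbhd_ball t xX (_ : 0 < t - a)); last lra.
  by move=> y s /Rabs_def2[? ?] ?; exfalso; lra.
have right_piece : prod_nbhd x t (fun y s => ~ s <= a -> K2 y s \in U).
  have [t_lt_a|a_le_t] := Rlt_le_dec t a.
    apply: prod_nbhdW (prod_nbhd_ball t xX (_ : 0 < a - t)); last lra.
    by move=> y s /Rabs_def2[? ?] ?; exfalso; lra.
  have K2U : K2 x t \in U.
    case: (Rle_dec t a) KU => //= t_le_a K1U; have t_eq_a : t = a by lra.
    by rewrite t_eq_a -K12 // -t_eq_a.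
  exact: prod_nbhdW (K2c U oU x t xX ut K2U) => y s KyU _.
apply: prod_nbhdW (prod_nbhdI left_piece right_piece) => y s [K1U K2U].
by case: (Rle_dec s a) => /= s_a; [apply: K1U | apply: K2U].
Qed.

Lemma homotopic_sym f g : homotopic f g -> homotopic g f.
Proof.
move=> [H [HX Hends Hc]]; exists (fun x t => H x (1 - t)); split.
- by move=> x t xX [? ?]; apply: HX => //; split; lra.
- move=> x xX; have [H0 H1] := Hends x xX.
  by rewrite Rminus_0_r Rminus_diag.
apply: (homotopy_continuous_reparam (phi := fun t => 1 - t) (k := 1)) Hc.
- lra.
- by move=> t [? ?]; split; lra.
move=> s t; replace (1 - s - (1 - t)) with (- (s - t)) by ring.
by rewrite Rabs_Ropp; lra.
Qed.

Lemma homotopic_trans f g h : homotopic f g -> homotopic g h -> homotopic f h.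
Proof.
move=> [H1 [H1X H1ends H1c]] [H2 [H2X H2ends H2c]].
(* Clamped, so that each half is a 2-Lipschitz self-map of [0, 1]. *)
pose first_half t := Rmin (2 * t) 1.
pose second_half t := Rmax (2 * t - 1) 0.
have first_halfI t : unit_interval t -> unit_interval (first_half t).
  by rewrite /first_half /Rmin => -[? ?]; case: Rle_dec => /= ?; split; lra.
have second_halfI t : unit_interval t -> unit_interval (second_half t).
  by rewrite /second_half /Rmax => -[? ?]; case: Rle_dec => /= ?; split; lra.
have abs_ge s t : s - t <= Rabs (s - t) /\ t - s <= Rabs (s - t).
  by rewrite Rabs_minus_sym; split; [rewrite Rabs_minus_sym|]; apply: Rle_abs.
have first_half_lip s t : Rabs (first_half s - first_half t) <= 2 * Rabs (s - t).
  have [? ?] := abs_ge s t; apply: Rabs_le; rewrite /first_half /Rmin.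
  by do 2 case: Rle_dec => /= ?; split; lra.
have second_half_lip s t : Rabs (second_half s - second_half t) <= 2 * Rabs (s - t).
  have [? ?] := abs_ge s t; apply: Rabs_le; rewrite /second_half /Rmax.
  by do 2 case: Rle_dec => /= ?; split; lra.
exists (fun x t => if Rle_dec t (/ 2) then H1 x (first_half t)
                   else H2 x (second_half t)); split.
- move=> x t xX ut; case: Rle_dec => /= _.
    exact: H1X (first_halfI t ut).
  exact: H2X (second_halfI t ut).
- move=> x xX; have [H10 _] := H1ends x xX; have [_ H21] := H2ends x xX.
  have -> : first_half 0 = 0 by rewrite /first_half Rmin_left; lra.
  have -> : second_half 1 = 1 by rewrite /second_half Rmax_left; lra.
  split; case: Rle_dec => /= ?; rewrite ?H10 ?H21 //; exfalso; lra.
apply: homotopy_continuous_glue.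
- move=> x xX; have [_ H11] := H1ends x xX; have [H20 _] := H2ends x xX.
  have -> : first_half (/ 2) = 1 by rewrite /first_half Rmin_right; lra.
  have -> : second_half (/ 2) = 0 by rewrite /second_half Rmax_right; lra.
  by rewrite H11 H20.
- by apply: homotopy_continuous_reparam first_halfI first_half_lip H1c; lra.
by apply: homotopy_continuous_reparam second_halfI second_half_lip H2c; lra.
Qed.

Lemma eq_in_homotopic f f' g :
  {in X, f =1 f'} -> homotopic f g -> homotopic f' g.
Proof.
move=> eq_ff' [H [HX Hends Hc]]; exists H; split=> // x xX.
by rewrite -eq_ff' //; exact: Hends.
Qed.

Lemma homotopic_contractible x0 :
  x0 \in X -> homotopic id (fun=> x0) -> contractible le X.
Proof.
by move=> x0X [H [HX Hends Hc]]; exists x0; split=> //; exists H.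
Qed.

End FiniteSpaceHomotopy.

Section OrbitPosetHomotopy.
Variables (gT : finGroupType) (G : {group gT}).
Local Notation gset := {set {group gT}}.

Lemma chainsP (S c : gset) :
  reflect [/\ c != set0, c \subset S &
              {in c &, forall P Q : {group gT}, (P \subset Q) || (Q \subset P)}]
          (c \in chains S).
Proof.
rewrite inE; apply: (iffP and3P) => [[c0 cS /forall_inP cmp]|[c0 cS cmp]].
  by split=> // P Q Pc Qc; have /forall_inP := cmp P Pc; apply.
by split=> //; apply/forall_inP=> P Pc; apply/forall_inP=> Q Qc; apply: cmp.
Qed.

Lemma sub_chain (S c d : gset) :
  d != set0 -> d \subset c -> c \in chains S -> d \in chains S.
Proof.
move=> d0 sdc /chainsP[_ cS cmp]; apply/chainsP; split=> //.
  exact: subset_trans sdc cS.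
by move=> P Q Pd Qd; apply: cmp; apply: (subsetP sdc).
Qed.

Lemma set1_chain (S : gset) N : N \in S -> [set N] \in chains S.
Proof.
move=> NS; apply/chainsP; split; first by apply/set0Pn; exists N; rewrite set11.
  by rewrite sub1set.
by move=> P Q /set1P-> /set1P->; rewrite subxx.
Qed.

Lemma setU1_chain (S c : gset) N :
  N \in S -> {in c, forall P : {group gT}, N \subset P} ->
  c \in chains S -> N |: c \in chains S.
Proof.
move=> NS sNc /chainsP[_ cS cmp]; apply/chainsP; split.
- by apply/set0Pn; exists N; rewrite setU11.
- by rewrite subUset sub1set NS.
move=> P Q /setU1P[->|Pc] /setU1P[->|Qc]; first by rewrite subxx.
- by rewrite sNc.
- by rewrite sNc ?orbT.
exact: cmp.
Qed.

Lemma conjG_id (H : {group gT}) g : g \in 'N(H) -> (H :^ g)%G = H.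
Proof. by move=> nHg; apply: val_inj; exact: normP. Qed.

Lemma chain_conj1 (c : gset) : chain_conj c 1 = c.
Proof.
by rewrite -[RHS]imset_id; apply: eq_imset => P; rewrite conjG_id ?group1.
Qed.

Lemma chain_orbit_refl (c : gset) : c \in chain_orbit G c.
Proof. by apply/imsetP; exists 1; rewrite ?group1 ?chain_conj1. Qed.

Definition conj_equivariant (F : gset -> gset) : Prop :=
  forall c g, g \in G -> F (chain_conj c g) = chain_conj (F c) g.

Definition chain_map (S : gset) (F : gset -> gset) : Prop :=
  [/\ conj_equivariant F, {homo F : c d / c \subset d} &
      {in chains S, forall c, F c \in chains S}].

Lemma conj_equivariant_imset (f : {group gT} -> {group gT}) :
  (forall P g, g \in G -> f (P :^ g)%G = (f P :^ g)%G) ->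
  conj_equivariant (fun c => f @: c).
Proof.
move=> fJ c g gG; rewrite /chain_conj -!imset_comp.
by apply: eq_imset => P /=; rewrite fJ.
Qed.

Lemma conj_equivariantU F1 F2 : conj_equivariant F1 -> conj_equivariant F2 ->
  conj_equivariant (fun c => F1 c :|: F2 c).
Proof. by move=> F1J F2J c g gG; rewrite F1J // F2J // /chain_conj imsetU. Qed.

Lemma conj_equivariant_const (N : {group gT}) : G \subset 'N(N) ->
  conj_equivariant (fun=> [set N]).
Proof.
move=> nNG c g gG; rewrite /chain_conj imset_set1 conjG_id //.
exact: subsetP nNG g gG.
Qed.

Definition orbit_map (F : gset -> gset) (O : {set gset}) : {set gset} := F @: O.

Lemma orbit_map_chain_orbit F c :
  conj_equivariant F -> orbit_map F (chain_orbit G c) = chain_orbit G (F c).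
Proof.
move=> FJ; rewrite /orbit_map /chain_orbit -imset_comp.
by apply: eq_in_imset => g gG /=; exact: FJ.
Qed.

Lemma homotopic_orbit_map (S : gset) F F' :
  chain_map S F -> chain_map S F' -> {in chains S, forall c, F c \subset F' c} ->
  homotopic (@orbit_le gT) (orbit_poset G S) (orbit_map F) (orbit_map F').
Proof.
have orbit_mapP H : chain_map S H ->
    {in orbit_poset G S, forall O, orbit_map H O \in orbit_poset G S}.
  case=> HJ _ Hc _ /imsetP[c cS ->].
  by rewrite orbit_map_chain_orbit //; apply: imset_f; exact: Hc.
have orbit_map_homo H : chain_map S H ->
    {in orbit_poset G S &, {homo orbit_map H : O1 O2 / orbit_le O1 O2}}.
  case=> _ Hhomo _ O1 O2 _ _ /exists_inP[c cO1 /exists_inP[d dO2 scd]].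
  apply/exists_inP; exists (H c); first exact: imset_f.
  by apply/exists_inP; exists (H d); [exact: imset_f | exact: Hhomo].
move=> FS F'S sFF'; apply: homotopic_le; try exact: orbit_mapP;
  try exact: orbit_map_homo.
move=> _ /imsetP[c cS ->]; case: FS F'S => [FJ _ _] [F'J _ _].
rewrite !orbit_map_chain_orbit //; apply/exists_inP; exists (F c).
  exact: chain_orbit_refl.
by apply/exists_inP; exists (F' c); [exact: chain_orbit_refl | exact: sFF'].
Qed.

Lemma chain_map_id (S : gset) : chain_map S (fun c => c).
Proof. by split. Qed.

Lemma homotopic_orbit_map_const (S : gset) F (N : {group gT}) :
  N \in S -> G \subset 'N(N) -> chain_map S F ->
  {in chains S, forall c, {in F c, forall P : {group gT}, N \subset P}} ->
  homotopic (@orbit_le gT) (orbit_poset G S)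
    (orbit_map F) (orbit_map (fun=> [set N])).
Proof.
move=> NS nNG FS sNF; case: (FS) => FJ Fhomo Fchain.
have constJ := conj_equivariant_const nNG.
have const_map : chain_map S (fun=> [set N]).
  by split=> // c _; exact: set1_chain.
have addN_map : chain_map S (fun c => N |: F c).
  split; first exact: conj_equivariantU.
    by move=> c d /Fhomo; exact: setUS.
  by move=> c cS; apply: setU1_chain; [| exact: sNF | exact: Fchain].
apply: homotopic_trans (homotopic_orbit_map FS addN_map _) _.
  by move=> c _; exact: subsetUr.
apply: homotopic_sym; apply: homotopic_orbit_map const_map addN_map _ => c _.
exact: subsetUl.
Qed.

Lemma contractible_orbit_poset (S : gset) (N : {group gT}) :
  N \in S -> G \subset 'N(N) ->
  homotopic (@orbit_le gT) (orbit_poset G S)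
    (orbit_map (fun c => c)) (orbit_map (fun=> [set N])) ->
  contractible (@orbit_le gT) (orbit_poset G S).
Proof.
move=> NS nNG id_const.
have orbit_map_id : {in orbit_poset G S, orbit_map (fun c => c) =1 id}.
  by move=> O _; rewrite /orbit_map imset_id.
have orbit_map_const : {in orbit_poset G S,
    orbit_map (fun=> [set N]) =1 fun=> chain_orbit G [set N]}.
  move=> _ /imsetP[c _ ->].
  by rewrite orbit_map_chain_orbit //; exact: conj_equivariant_const.
apply: (@homotopic_contractible _ _ _ (chain_orbit G [set N])).
  by apply: imset_f; exact: set1_chain.
apply: eq_in_homotopic orbit_map_id _; apply: homotopic_sym.
exact: eq_in_homotopic orbit_map_const (homotopic_sym id_const).
Qed.

End OrbitPosetHomotopy.

Lemma SpP (gT : finGroupType) (G P : {group gT}) (p : nat) :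
  reflect [/\ P \subset G, p.-group P & P :!=: 1] (P \in Sp G p).
Proof. by rewrite inE -andbA; apply: and3P. Qed.

Section JoinNormalPSubgroup.
Variables (gT : finGroupType) (G N : {group gT}) (p : nat).
Hypotheses (nsNG : N <| G) (pN : p.-group N).
Local Notation homotopic_Sp :=
  (homotopic (@orbit_le gT) (orbit_poset G (Sp G p))).

Definition join_above n (P : {group gT}) : {group gT} :=
  if #|P| < n then P else (P <*> N)%G.

Lemma join_above_conj n P g :
  g \in G -> join_above n (P :^ g)%G = (join_above n P :^ g)%G.
Proof.
move=> gG; rewrite /join_above cardJg; case: ifP => _; apply: val_inj => //=.
by rewrite conjYg (normP (subsetP (normal_norm nsNG) g gG)).
Qed.

Lemma join_above_Sp n P : P \in Sp G p -> join_above n P \in Sp G p.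
Proof.
rewrite /join_above; case: ifP => // _ /SpP[sPG pP ntP].
have nNP : P \subset 'N(N) := subset_trans sPG (normal_norm nsNG).
apply/SpP; split.
- by rewrite join_subG sPG normal_sub.
- by rewrite /= norm_joinEl // pgroupM pP.
by apply: contra ntP; rewrite -!subG1; apply: subset_trans (joing_subl P N).
Qed.

Lemma join_above_comparable i j (P Q : {group gT}) :
  i <= j.+1 -> j <= i.+1 -> (P \subset Q) || (Q \subset P) ->
  (join_above i P \subset join_above j Q)
  || (join_above j Q \subset join_above i P).
Proof.
have directed i' j' (P' Q' : {group gT}) : j' <= i'.+1 -> P' \subset Q' ->
    (join_above i' P' \subset join_above j' Q')
    || (join_above j' Q' \subset join_above i' P').
  rewrite /join_above => ji sPQ; case: ifP => P_small; case: ifP => Q_small.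
  - by rewrite sPQ.
  - by rewrite (subset_trans sPQ (joing_subl _ _)).
  - have eqPQ : P' = Q'.
      apply/val_inj/eqP; rewrite eqEcard sPQ /=.
      by rewrite -ltnS (leq_trans Q_small) // (leq_trans ji) // ltnNge P_small.
    by rewrite eqPQ joing_subl orbT.
  - by rewrite genS // setSU.
move=> ij ji /orP[sPQ|sQP]; first exact: directed.
by rewrite orbC; exact: directed.
Qed.

Lemma join_above_step_chain n c : c \in chains (Sp G p) ->
  [set join_above n P | P in c] :|: [set join_above n.+1 P | P in c]
    \in chains (Sp G p).
Proof.
case/chainsP=> c0 cS cmp; apply/chainsP; split.
- case/set0Pn: c0 => P Pc; apply/set0Pn; exists (join_above n P).
  by rewrite inE imset_f.
- by rewrite subUset; apply/andP; split; apply/subsetP=> _ /imsetP[P Pc ->];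
    apply: join_above_Sp; exact: (subsetP cS).
move=> _ _ /setUP[|] /imsetP[P Pc ->] /setUP[|] /imsetP[Q Qc ->];
  by apply: join_above_comparable; rewrite ?cmp ?leqnn ?leqnSn ?(leqW (leqnSn n)).
Qed.

Lemma join_above_large n c : #|G| < n -> c \in chains (Sp G p) ->
  [set join_above n P | P in c] = c.
Proof.
move=> Gn /chainsP[_ cS _]; rewrite -[RHS]imset_id; apply: eq_in_imset => P Pc.
have /SpP[sPG _ _] := subsetP cS P Pc.
by rewrite /join_above (leq_ltn_trans (subset_leq_card sPG) Gn).
Qed.

Lemma Sp_orbit_contractible :
  N :!=: 1 -> contractible (@orbit_le gT) (orbit_poset G (Sp G p)).
Proof.
move=> ntN; have NSp : N \in Sp G p by apply/SpP; rewrite normal_sub.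
have nNG := normal_norm nsNG.
pose cut n (c : {set {group gT}}) := [set join_above n P | P in c].
have cutJ n : conj_equivariant G (cut n).
  exact/conj_equivariant_imset/join_above_conj.
have step_map n : chain_map G (Sp G p) (fun c => cut n c :|: cut n.+1 c).
  split; first exact: conj_equivariantU.
    by move=> c d scd; rewrite setUSS ?imsetS.
  exact: join_above_step_chain.
have cut_map n : chain_map G (Sp G p) (cut n).
  split=> // [c d|c cS]; first exact: imsetS.
  apply: sub_chain (join_above_step_chain n cS); last exact: subsetUl.
  case/chainsP: cS => /set0Pn[P Pc] _ _; apply/set0Pn.
  by exists (join_above n P); exact: imset_f.
have cut0_cut n : homotopic_Sp (orbit_map (cut 0)) (orbit_map (cut n)).
  elim: n => [|n IHn]; first exact: homotopic_orbit_map (cut_map 0) _ _.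
  apply: homotopic_trans IHn (homotopic_trans _ (homotopic_sym _)).
    apply: homotopic_orbit_map (cut_map n) (step_map n) _ => c _.
    exact: subsetUl.
  apply: homotopic_orbit_map (cut_map n.+1) (step_map n) _ => c _.
  exact: subsetUr.
have id_cut : homotopic_Sp (orbit_map (fun c => c)) (orbit_map (cut #|G|.+1)).
  apply: homotopic_orbit_map (chain_map_id _ _) (cut_map _) _ => c cS.
  by rewrite /cut join_above_large.
have cut0_const : homotopic_Sp (orbit_map (cut 0)) (orbit_map (fun=> [set N])).
  apply: (homotopic_orbit_map_const NSp nNG (cut_map 0)).
  by move=> c _ _ /imsetP[P _ ->]; rewrite /join_above ltn0 joing_subr.
apply: (contractible_orbit_poset NSp nNG).
apply: homotopic_trans id_cut _.
exact: homotopic_trans (homotopic_sym (cut0_cut _)) cut0_const.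
Qed.

End JoinNormalPSubgroup.

Lemma pcore_sub_radical (gT : finGroupType) (G P : {group gT}) (p : nat) :
  P :=: 'O_p('N_G(P)) -> 'O_p(G) \subset P.
Proof.
move=> defP; set N := 'O_p(G).
have sPG : P \subset G.
  by rewrite defP; exact: subset_trans (pcore_sub _ _) (subsetIl _ _).
have nNP : P \subset 'N(N) := subset_trans sPG (normal_norm (pcore_normal p G)).
have pPN : p.-group (P <*> N).
  by rewrite norm_joinEl // pgroupM {1}defP !pcore_pgroup.
have sNNP : 'N_G(P) :&: N \subset P.
  rewrite {2}defP; apply: pcore_max.
    exact: pgroupS (subsetIr _ _) (pcore_pgroup _ _).
  exact: normalGI (subsetIl _ _) (pcore_normal _ _).
suff <- : (P <*> N)%G :=: P by exact: joing_subr.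
apply: nilpotent_sub_norm (pgroup_nil pPN) (joing_subl _ _) _.
rewrite /= norm_joinEl // -group_modl ?normG // mul_subG //.
apply: subset_trans sNNP; rewrite subsetI subsetIl andbT.
exact: setSI (pcore_sub _ _).
Qed.

Section Radical.
Variables (gT : finGroupType) (G : {group gT}) (p : nat).

Lemma pcore_Bp : 'O_p(G) :!=: 1 -> 'O_p(G)%G \in Bp G p.
Proof.
move=> ntN; rewrite inE; apply/andP; split.
  by apply/SpP; rewrite pcore_sub pcore_pgroup.
by rewrite (setIidPl (normal_norm (pcore_normal p G))).
Qed.

Lemma Bp_orbit_contractible :
  'O_p(G) :!=: 1 -> contractible (@orbit_le gT) (orbit_poset G (Bp G p)).
Proof.
move=> ntN; have NBp := pcore_Bp ntN.
have nNG := normal_norm (pcore_normal p G).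
apply: (contractible_orbit_poset NBp nNG).
apply: (homotopic_orbit_map_const NBp nNG (chain_map_id _ _)).
move=> c /chainsP[_ cBp _] P Pc; apply: pcore_sub_radical.
by have := subsetP cBp P Pc; rewrite inE => /andP[_ /eqP].
Qed.

End Radical.

Theorem proposition5p4 (gT : finGroupType) (G : {group gT}) (p : nat) :
  prime p -> p %| #|G| -> ('O_p(G) != 1)%g ->
  contractible (@orbit_le gT) (orbit_poset G (Sp G p)) /\
  contractible (@orbit_le gT) (orbit_poset G (Bp G p)).
Proof.
move=> _ _ ntN; split; last exact: Bp_orbit_contractible.
exact: Sp_orbit_contractible (pcore_normal p G) (pcore_pgroup p G) ntN.
Qed.
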